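(* Given a set of $n$ trajectories in $\mathbb{R}^1$, each piecewise linear with vertices at times $t_0,\dots,t_\tau$, a central trajectory with $\varepsilon=0$ has worst-case complexity $O(\tau n^2)$.
   Context: Setting: $\mathcal{X}$ is a set of $n$ entities moving in $\mathbb{R}^1$ along piecewise-linear trajectories with vertices at the common times $t_0<\dots<t_\tau$, in general position (no three trajectories pass through the same point at the same time). With $\varepsilon=0$, a trajectoid is a function $\mathcal{T}:[t_0,t_\tau]\to\mathcal{X}$ that may switch from $\sigma$ to $\psi$ at time $t$ only if $\sigma(t)=\psi(t)$. $D(\sigma,t)=\max_{\psi\in\mathcal{X}}|\sigma(t)-\psi(t)|$. A central trajectory is a trajectoid minimizing $\int_{t_0}^{t_\tau}D(\mathcal{T}(t),t)\,dt$. The complexity of a trajectoid is the number of pieces of the curve $t\mapsto\mathcal{T}(t)(t)$, i.e. the number of maximal time intervals on which $\mathcal{T}$ is a single entity and that entity moves linearly. *)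

From Stdlib Require Import Reals Lra List.
Import ListNotations.
Open Scope R_scope.

(* An instance: n entities indexed 0..n-1, entity i has position X i t at time t.
   Vertex times tm 0 < tm 1 < ... < tm tau. *)

Definition in_span (tm : nat -> R) (tau : nat) (t : R) : Prop :=
  tm 0%nat <= t <= tm tau.

Definition increasing_times (tm : nat -> R) (tau : nat) : Prop :=
  forall k, (k < tau)%nat -> tm k < tm (S k).

Definition piecewise_linear (tm : nat -> R) (tau n : nat) (X : nat -> R -> R) : Prop :=
  forall i k, (i < n)%nat -> (k < tau)%nat ->
    exists a b : R, forall t, tm k <= t <= tm (S k) -> X i t = a * t + b.

(* general position: no three trajectories meet at the same point at the same
   time, and two distinct trajectories meet only at finitely many times
   (in particular they never coincide on a time interval). *)
Definition general_position (tm : nat -> R) (tau n : nat) (X : nat -> R -> R) : Prop :=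
  (forall i j k t, (i < n)%nat -> (j < n)%nat -> (k < n)%nat ->
     i <> j -> j <> k -> i <> k -> in_span tm tau t ->
     ~ (X i t = X j t /\ X j t = X k t)) /\
  (forall i j, (i < n)%nat -> (j < n)%nat -> i <> j ->
     exists l : list R, forall t, in_span tm tau t -> X i t = X j t -> In t l).

Definition Dist (n : nat) (X : nat -> R -> R) (i : nat) (t : R) : R :=
  fold_right Rmax 0 (map (fun j => Rabs (X i t - X j t)) (seq 0 n)).

(* Trajectoid (epsilon = 0): T maps each time to an entity; it may switch from
   sigma to psi at time t only if sigma(t) = psi(t): every entity used by T at
   times close to t is, at time t, at the same position as T(t). *)
Definition trajectoid (tm : nat -> R) (tau n : nat) (X : nat -> R -> R)
    (T : R -> nat) : Prop :=
  (forall t, in_span tm tau t -> (T t < n)%nat) /\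
  (forall t, in_span tm tau t ->
     exists delta, delta > 0 /\
       forall s, in_span tm tau s -> Rabs (s - t) < delta ->
         X (T s) t = X (T t) t).

Definition cost_integrable (tm : nat -> R) (tau n : nat) (X : nat -> R -> R)
    (T : R -> nat) : Type :=
  Riemann_integrable (fun t => Dist n X (T t) t) (tm 0%nat) (tm tau).

Definition central (tm : nat -> R) (tau n : nat) (X : nat -> R -> R)
    (T : R -> nat) : Prop :=
  trajectoid tm tau n X T /\
  exists pr : cost_integrable tm tau n X T,
    forall T' (pr' : cost_integrable tm tau n X T'),
      trajectoid tm tau n X T' -> RiemannInt pr <= RiemannInt pr'.

Definition good_interval (tm : nat -> R) (tau : nat) (X : nat -> R -> R)
    (T : R -> nat) (I : R -> Prop) : Prop :=
  (exists t, I t) /\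
  (forall x y z, I x -> I y -> x <= z <= y -> I z) /\
  (forall t, I t -> in_span tm tau t) /\
  (exists (s : nat) (a b : R), forall t, I t -> T t = s /\ X s t = a * t + b).

Definition piece (tm : nat -> R) (tau : nat) (X : nat -> R -> R)
    (T : R -> nat) (I : R -> Prop) : Prop :=
  good_interval tm tau X T I /\
  forall J, good_interval tm tau X T J -> (forall t, I t -> J t) ->
    forall t, J t -> I t.

Definition complexity_le (tm : nat -> R) (tau : nat) (X : nat -> R -> R)
    (T : R -> nat) (m : R) : Prop :=
  forall L : list (R -> Prop),
    (forall I, In I L -> piece tm tau X T I) ->
    (forall i j, (i < length L)%nat -> (j < length L)%nat -> i <> j ->
       exists t, ~ (nth i L (fun _ => False) t <-> nth j L (fun _ => False) t)) ->
    INR (length L) <= m.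

From Stdlib Require Import Reals List Lra Lia Classical.
Import ListNotations.
Open Scope R_scope.

(* With epsilon = 0 the bound holds for every trajectoid, central or not.
   Call an event a vertex time or a time at which two trajectories meet; in
   general position two entities meet at most once between consecutive vertex
   times, so there are at most (tau + 1) + tau n^2 events.  A trajectoid can
   only switch entity at an event, so it is constant, and moves linearly, on
   every gap between consecutive events.  Hence a piece either consists of
   events only, and is then a single event, or contains a non-event time, and
   it is then determined by the last event before that time.  So there are at
   most twice as many pieces as events. *)

Lemma exists_notin_between (l : list R) a b :
  a < b -> exists t, a <= t <= b /\ ~ In t l.
Proof.
  revert a b; induction l as [|x l IHl]; intros a b Hab.
  - exists a; split; [lra | simpl; tauto].
  - destruct (Rle_dec x ((a + b) / 2)).
    + destruct (IHl ((a + b) / 2 + (b - a) / 4) b) as [t [Ht Hn]]; [lra|].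
      exists t; split; [lra|]. intros [H|H]; [lra | tauto].
    + destruct (IHl a ((a + b) / 2)) as [t [Ht Hn]]; [lra|].
      exists t; split; [lra|]. intros [H|H]; [lra | tauto].
Qed.

Lemma exists_max_lt_In (l : list R) t :
  (exists c, In c l /\ c < t) ->
  exists x, In x l /\ x < t /\ forall c, In c l -> c < t -> c <= x.
Proof.
  induction l as [|a l IH]; intros [c [Hc Hct]]; [destruct Hc|].
  destruct (classic (exists c, In c l /\ c < t)) as [Hex|Hno].
  - destruct (IH Hex) as [x [Hx [Hxt Hmax]]].
    destruct (Rlt_dec a t); [destruct (Rlt_dec x a)|].
    + exists a; repeat split; [left; auto | auto |].
      intros c0 [<-|Hc0] Hc0t; [lra|]. pose proof (Hmax c0 Hc0 Hc0t); lra.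
    + exists x; repeat split; [right; auto | auto |].
      intros c0 [<-|Hc0] Hc0t; [lra | auto].
    + exists x; repeat split; [right; auto | auto |].
      intros c0 [<-|Hc0] Hc0t; [lra | auto].
  - destruct Hc as [<-|Hc]; [|exfalso; apply Hno; eauto].
    exists a; repeat split; [left; auto | auto |].
    intros c0 [<-|Hc0] Hc0t; [lra|]. exfalso; apply Hno; eauto.
Qed.

Lemma affine_eq_two_points p q a1 b1 a2 b2 :
  p <> q -> a1 * p + b1 = a2 * p + b2 -> a1 * q + b1 = a2 * q + b2 ->
  a1 = a2 /\ b1 = b2.
Proof.
  intros Hpq E1 E2.
  assert (Ha : a1 = a2).
  { apply Rmult_eq_reg_r with (p - q); [lra|]. intro; apply Hpq; lra. }
  subst; split; lra.
Qed.

Lemma convex_union (A B : R -> Prop) p :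
  (forall x y z, A x -> A y -> x <= z <= y -> A z) ->
  (forall x y z, B x -> B y -> x <= z <= y -> B z) ->
  A p -> B p ->
  forall x y z, (A x \/ B x) -> (A y \/ B y) -> x <= z <= y -> A z \/ B z.
Proof.
  intros HA HB Ap Bp x y z [Ax|Bx] [Ay|By] Hz.
  - left; eauto.
  - destruct (Rle_dec z p); [left; apply HA with x p | right; apply HB with p y];
      auto; lra.
  - destruct (Rle_dec z p); [right; apply HB with x p | left; apply HA with p y];
      auto; lra.
  - right; eauto.
Qed.

(* Connectedness of [a, b], via the supremum of the initial segments on which
   [f] is constant. *)
Lemma locally_constant_interval (f : R -> nat) a b : a <= b ->
  (forall x, a <= x <= b -> exists d, d > 0 /\
     forall y, a <= y <= b -> Rabs (y - x) < d -> f y = f x) ->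
  forall z, a <= z <= b -> f z = f a.
Proof.
  intros Hab Hloc.
  set (E := fun x => a <= x <= b /\ forall y, a <= y <= x -> f y = f a).
  assert (HEa : E a).
  { split; [lra|]. intros y Hy; replace y with a by lra; auto. }
  destruct (completeness E) as [c [Hub Hlub]];
    [exists b; intros x [Hx _]; lra | exists a; auto |].
  assert (Hac : a <= c) by (apply Hub; auto).
  assert (Hcb : c <= b) by (apply Hlub; intros x [Hx _]; lra).
  assert (Hbelow : forall y, a <= y < c -> f y = f a).
  { intros y Hy.
    destruct (classic (exists x, E x /\ y <= x)) as [[x [[_ Hx] Hyx]]|Hno].
    - apply Hx; lra.
    - exfalso. assert (c <= y); [|lra]. apply Hlub. intros x Hx.
      destruct (Rle_dec x y); auto. exfalso; apply Hno; exists x; split; auto; lra. }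
  destruct (Hloc c ltac:(lra)) as [d [Hd Hdc]].
  assert (Hc : f c = f a).
  { destruct (Req_dec c a) as [->|Hne]; auto.
    set (y := Rmax a (c - d / 2)).
    assert (a <= y < c) by (unfold y, Rmax; destruct Rle_dec; lra).
    rewrite <- (Hbelow y); auto. symmetry; apply Hdc; [lra|].
    apply Rabs_def1; unfold y, Rmax; destruct Rle_dec; lra. }
  assert (Hupto_c : forall y, a <= y <= c -> f y = f a).
  { intros y Hy. destruct (Req_dec y c) as [->|]; auto. apply Hbelow; lra. }
  assert (Hcb' : c = b).
  { destruct (Req_dec c b); auto. exfalso.
    set (z := Rmin b (c + d / 2)).
    assert (c < z <= b) by (unfold z, Rmin; destruct Rle_dec; lra).
    assert (Ez : E z).
    { split; [lra|]. intros y Hy. destruct (Rle_dec y c); [apply Hupto_c; lra|].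
      rewrite <- Hc. apply Hdc; [lra|].
      apply Rabs_def1; unfold z, Rmin in *; destruct Rle_dec; lra. }
    pose proof (Hub z Ez). lra. }
  subst c. intros z Hz; apply Hupto_c; lra.
Qed.

Lemma cover_union_bound (Q : nat -> R -> Prop) (c N : nat) :
  (forall m, (m < N)%nat ->
     exists l, (length l <= c)%nat /\ forall t, Q m t -> In t l) ->
  exists l, (length l <= N * c)%nat /\
    forall m t, (m < N)%nat -> Q m t -> In t l.
Proof.
  induction N as [|N IHN]; intros H.
  - exists nil; split; simpl; [lia | intros; lia].
  - destruct IHN as [l1 [H1 H2]]; [intros m Hm; apply H; lia|].
    destruct (H N) as [l2 [H3 H4]]; [lia|].
    exists (l2 ++ l1); split; [rewrite length_app; simpl; lia|].
    intros m t Hm HQ. apply in_or_app.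
    destruct (Nat.eq_dec m N) as [->|]; [left; auto | right; apply H2 with m; auto; lia].
Qed.

Lemma labelling_length_le {E A : Type} (A_dec : forall x y : A, {x = y} + {x <> y})
    (P : E -> A -> Prop) (d : E) (L : list E) (K : list A) :
  (forall I, In I L -> exists b, In b K /\ P I b) ->
  (forall i j, (i < length L)%nat -> (j < length L)%nat -> i <> j -> forall b,
     P (nth i L d) b -> P (nth j L d) b -> False) ->
  (length L <= length K)%nat.
Proof.
  revert K; induction L as [|I L IH]; intros K Hex Hdis; [simpl; lia|].
  destruct (Hex I (or_introl eq_refl)) as [b [Hb HPb]].
  assert ((length L <= length (remove A_dec b K))%nat).
  { apply IH.
    - intros J HJ. destruct (Hex J (or_intror HJ)) as [b' [Hb' HP']].
      exists b'; split; auto. apply in_in_remove; auto. intros ->.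
      destruct (In_nth L J d HJ) as [j [Hj Hnth]].
      apply (Hdis 0%nat (S j)) with b; simpl; try lia; auto. rewrite Hnth; auto.
    - intros i j Hi Hj Hij b0 H1 H2. apply (Hdis (S i) (S j)) with b0; simpl; auto; lia. }
  pose proof (remove_length_lt A_dec K b Hb). simpl; lia.
Qed.

Lemma increasing_times_le tm tau : increasing_times tm tau ->
  forall p q, (p <= q)%nat -> (q <= tau)%nat -> tm p <= tm q.
Proof.
  intros Hinc p q; induction q as [|q IHq]; intros Hpq Hq.
  - replace p with 0%nat by lia; lra.
  - destruct (Nat.eq_dec p (S q)) as [->|Hne]; [lra|].
    pose proof (Hinc q ltac:(lia)). pose proof (IHq ltac:(lia) ltac:(lia)). lra.
Qed.

Lemma in_span_cell tm tau t : increasing_times tm tau -> (1 <= tau)%nat ->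
  in_span tm tau t -> exists k, (k < tau)%nat /\ tm k <= t <= tm (S k).
Proof.
  intros Hinc Htau [H0 H1].
  enough (Hm : forall m, (1 <= m)%nat -> (m <= tau)%nat -> t <= tm m ->
            exists k, (k < m)%nat /\ tm k <= t <= tm (S k)) by (apply Hm; auto).
  induction m as [|[|m] IHm]; intros Hm1 Hm2 Ht; [lia | exists 0%nat; split; [lia | lra] |].
  destruct (Rle_dec t (tm (S m))) as [Hle|Hgt].
  - destruct (IHm ltac:(lia) ltac:(lia) Hle) as [k [Hk Hk2]]. exists k; split; [lia | lra].
  - exists (S m); split; [lia | lra].
Qed.

Definition crossing tm tau n (X : nat -> R -> R) k i j t : Prop :=
  (k < tau)%nat /\ (i < n)%nat /\ (j < n)%nat /\ i <> j /\
  tm k <= t <= tm (S k) /\ X i t = X j t.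

Section Crossings.

Variables (tm : nat -> R) (tau n : nat) (X : nat -> R -> R).
Hypothesis Hinc : increasing_times tm tau.
Hypothesis Hpl : piecewise_linear tm tau n X.
Hypothesis Hgp : general_position tm tau n X.

(* Two lines meeting twice coincide on the whole cell, which general position
   forbids since they would meet at every time of a nondegenerate interval. *)
Lemma crossing_unique k i j t1 t2 :
  crossing tm tau n X k i j t1 -> crossing tm tau n X k i j t2 -> t1 = t2.
Proof.
  intros (Hk & Hi & Hj & Hij & H1 & E1) (_ & _ & _ & _ & H2 & E2).
  destruct (Req_dec t1 t2) as [|Hne]; auto. exfalso.
  destruct (Hpl i k Hi Hk) as [a [b Hab]].
  destruct (Hpl j k Hj Hk) as [a' [b' Hab']].
  rewrite (Hab t1 H1), (Hab' t1 H1) in E1.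
  rewrite (Hab t2 H2), (Hab' t2 H2) in E2.
  destruct (affine_eq_two_points t1 t2 a b a' b' Hne E1 E2) as [-> ->].
  destruct (proj2 Hgp i j Hi Hj Hij) as [l Hl].
  destruct (exists_notin_between l (tm k) (tm (S k))) as [t [Ht Hnl]];
    [apply Hinc; auto|].
  apply Hnl, Hl.
  - pose proof (increasing_times_le tm tau Hinc 0 k ltac:(lia) ltac:(lia)).
    pose proof (increasing_times_le tm tau Hinc (S k) tau ltac:(lia) ltac:(lia)).
    split; lra.
  - rewrite (Hab t Ht), (Hab' t Ht); reflexivity.
Qed.

Lemma crossing_times_bound :
  exists Bc, (length Bc <= tau * (n * n))%nat /\
    forall k i j t, crossing tm tau n X k i j t -> In t Bc.
Proof.
  assert (Hpair : forall k i j, exists l, (length l <= 1)%nat /\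
            forall t, crossing tm tau n X k i j t -> In t l).
  { intros k i j.
    destruct (classic (exists t, crossing tm tau n X k i j t)) as [[t0 H0]|Hno].
    - exists [t0]; split; [simpl; lia|].
      intros t Ht; left; apply (crossing_unique k i j); auto.
    - exists []; split; [simpl; lia|]. intros t Ht; exfalso; eauto. }
  assert (Hentity : forall k i, exists l, (length l <= n * 1)%nat /\
            forall j t, (j < n)%nat -> crossing tm tau n X k i j t -> In t l).
  { intros k i. apply cover_union_bound. intros; apply Hpair. }
  assert (Hcell : forall k, exists l, (length l <= n * (n * 1))%nat /\
            forall i t, (i < n)%nat ->
              (exists j, crossing tm tau n X k i j t) -> In t l).
  { intros k. apply cover_union_bound. intros i Hi.
    destruct (Hentity k i) as [l [H1 H2]]. exists l; split; auto.
    intros t [j Hc]. apply (H2 j); auto. apply Hc. }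
  destruct (cover_union_bound
              (fun k t => exists i j, crossing tm tau n X k i j t) (n * (n * 1)) tau)
    as [Bc [H1 H2]].
  { intros k Hk. destruct (Hcell k) as [l [H1 H2]]. exists l; split; auto.
    intros t [i [j Hc]]. apply (H2 i); [apply Hc | eauto]. }
  exists Bc; split; [lia|].
  intros k i j t Hc. apply H2 with k; [apply Hc | eauto].
Qed.

End Crossings.

Lemma good_interval_affine tm tau X T I k p s a b :
  good_interval tm tau X T I -> I p -> tm k < p < tm (S k) -> T p = s ->
  (forall z, tm k <= z <= tm (S k) -> X s z = a * z + b) ->
  forall z, I z -> T z = s /\ X s z = a * z + b.
Proof.
  intros [_ [Hconv [_ [s1 [a1 [b1 Hl]]]]]] Hp Hpk HTp Hlin z Hz.
  destruct (Hl p Hp) as [Ts1 _]. replace s1 with s in Hl by congruence.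
  destruct (Hl z Hz) as [Tz Xz]. split; [congruence|].
  destruct (Rle_dec z (tm (S k))), (Rle_dec (tm k) z); [apply Hlin; lra | | | lra].
  - assert (Ik : I (tm k)) by (apply Hconv with z p; auto; lra).
    destruct (Hl _ Ik) as [_ E1]. destruct (Hl _ Hp) as [_ E2].
    rewrite Hlin in E1, E2 by lra.
    destruct (affine_eq_two_points (tm k) p a b a1 b1) as [-> ->]; auto; lra.
  - assert (Ik : I (tm (S k))) by (apply Hconv with p z; auto; lra).
    destruct (Hl _ Ik) as [_ E1]. destruct (Hl _ Hp) as [_ E2].
    rewrite Hlin in E1, E2 by lra.
    destruct (affine_eq_two_points (tm (S k)) p a b a1 b1) as [-> ->]; auto; lra.
Qed.

Lemma good_interval_in_list_singleton tm tau X T (B : list R) I t0 :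
  good_interval tm tau X T I -> (forall z, I z -> In z B) -> I t0 ->
  forall y, I y -> y = t0.
Proof.
  intros [_ [Hconv _]] HIB H0 y Hy.
  destruct (Req_dec y t0) as [|Hne]; auto. exfalso.
  destruct (Rle_dec y t0).
  - destruct (exists_notin_between B y t0) as [z [Hz Hn]]; [lra|].
    apply Hn, HIB, Hconv with y t0; auto.
  - destruct (exists_notin_between B t0 y) as [z [Hz Hn]]; [lra|].
    apply Hn, HIB, Hconv with t0 y; auto; lra.
Qed.

Definition piece_label (B : list R) (I : R -> Prop) (p : R * bool) : Prop :=
  match p with
  | (x, true) => I x /\ forall y, I y -> y = x
  | (x, false) => exists t, I t /\ ~ In t B /\ x < t /\
                    forall c, In c B -> c < t -> c <= x
  end.

Definition R_bool_dec : forall x y : R * bool, {x = y} + {x <> y}.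
Proof. decide equality; [apply Bool.bool_dec | apply Req_dec_T]. Defined.

Section Pieces.

Variables (tm : nat -> R) (tau n : nat) (X : nat -> R -> R) (T : R -> nat).
Hypothesis Htau : (1 <= tau)%nat.
Hypothesis Hinc : increasing_times tm tau.
Hypothesis Hpl : piecewise_linear tm tau n X.
Hypothesis Htr : trajectoid tm tau n X T.

Variable B : list R.
Hypothesis B_vertex : forall p, (p <= tau)%nat -> In (tm p) B.
Hypothesis B_meet : forall i j t, (i < n)%nat -> (j < n)%nat -> i <> j ->
  in_span tm tau t -> X i t = X j t -> In t B.

Lemma trajectoid_locally_constant t : in_span tm tau t -> ~ In t B ->
  exists d, d > 0 /\ forall s, in_span tm tau s -> Rabs (s - t) < d -> T s = T t.
Proof.
  intros Ht Hnb. destruct (proj2 Htr t Ht) as [d [Hd Hs]].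
  exists d; split; auto. intros s Hs' Hst.
  destruct (Nat.eq_dec (T s) (T t)) as [|Hne]; auto. exfalso.
  apply Hnb, (B_meet (T s) (T t)); auto; apply (proj1 Htr); auto.
Qed.

(* [T] is constant on [[t, t']], which lies inside one cell, so [I], [[t, t']]
   and [J] glue into one good interval; maximality of both pieces then forces
   [I = J]. *)
Lemma piece_ext_of_no_event_between I J t t' :
  piece tm tau X T I -> piece tm tau X T J -> I t -> J t' -> t <= t' ->
  ~ In t B -> ~ In t' B -> (forall c, In c B -> t <= c <= t' -> False) ->
  forall z, I z <-> J z.
Proof.
  intros HpI HpJ It Jt' Htt' HtB Ht'B noB.
  assert (Hst : in_span tm tau t) by (apply HpI; auto).
  assert (Hst' : in_span tm tau t') by (apply HpJ; auto).
  assert (Hconst : forall z, t <= z <= t' -> T z = T t).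
  { apply locally_constant_interval; auto. intros x Hx.
    assert (Hsx : in_span tm tau x) by (unfold in_span in *; lra).
    destruct (trajectoid_locally_constant x Hsx) as [d [Hd Hdd]];
      [intro Hx'; apply (noB x Hx' Hx)|].
    exists d; split; auto. intros y Hy Hyx. apply Hdd; auto. unfold in_span in *; lra. }
  destruct (in_span_cell tm tau t Hinc Htau Hst) as [k [Hk Htk]].
  assert (Hk1 : tm k <> t) by (intro E; apply HtB; rewrite <- E; apply B_vertex; lia).
  assert (Hk2 : t' < tm (S k)).
  { destruct (Rlt_le_dec t' (tm (S k))) as [|Hge]; auto. exfalso.
    apply (noB (tm (S k))); [apply B_vertex; lia | lra]. }
  set (s := T t).
  destruct (Hpl s k ltac:(apply (proj1 Htr); auto) Hk) as [a [b Hlin]].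
  pose proof (good_interval_affine tm tau X T I k t s a b
                (proj1 HpI) It ltac:(lra) eq_refl Hlin) as HI'.
  pose proof (good_interval_affine tm tau X T J k t' s a b
                (proj1 HpJ) Jt' ltac:(lra) (Hconst t' ltac:(lra)) Hlin) as HJ'.
  set (K := fun z => (I z \/ t <= z <= t') \/ J z).
  assert (HK : good_interval tm tau X T K).
  { destruct HpI as [[_ [CI [SI _]]] _]. destruct HpJ as [[_ [CJ [SJ _]]] _].
    split; [exists t; left; left; auto|]. split.
    { apply (convex_union _ J t'); auto; [|right; lra].
      apply (convex_union I _ t); auto; intros; lra. }
    split; [intros z [[Hz|Hz]|Hz]; auto; unfold in_span in *; lra|].
    exists s, a, b. intros z [[Hz|Hz]|Hz]; auto.
    split; [apply Hconst; auto | apply Hlin; lra]. }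
  intros z; split; intros Hz.
  - apply (proj2 HpJ K HK (fun z Hz => or_intror Hz)). left; left; auto.
  - apply (proj2 HpI K HK (fun z Hz => or_introl (or_introl Hz))). right; auto.
Qed.

Definition labels : list (R * bool) :=
  map (fun x => (x, true)) B ++ map (fun x => (x, false)) B.

Lemma piece_labelled I : piece tm tau X T I ->
  exists p, In p labels /\ piece_label B I p.
Proof.
  intros HpI.
  destruct (classic (exists t, I t /\ ~ In t B)) as [[t [HIt HtB]]|Hno].
  - assert (Hst : in_span tm tau t) by (apply HpI; auto).
    destruct (exists_max_lt_In B t) as [x [HxB [Hxt Hmax]]].
    { exists (tm 0%nat); split; [apply B_vertex; lia|].
      destruct (Req_dec (tm 0%nat) t) as [E|]; [|unfold in_span in Hst; lra].
      exfalso; apply HtB; rewrite <- E; apply B_vertex; lia. }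
    exists (x, false); split; [apply in_or_app; right; apply in_map_iff; eauto|].
    exists t; auto.
  - destruct (proj1 (proj1 HpI)) as [t0 Ht0].
    assert (HIB : forall z, I z -> In z B) by (intros z Hz; apply NNPP; eauto).
    exists (t0, true); split; [apply in_or_app; left; apply in_map_iff; eauto|].
    split; auto. apply (good_interval_in_list_singleton tm tau X T B); auto. apply HpI.
Qed.

Lemma piece_label_ext I J p : piece tm tau X T I -> piece tm tau X T J ->
  piece_label B I p -> piece_label B J p -> forall z, I z <-> J z.
Proof.
  intros HpI HpJ. destruct p as [x []]; simpl.
  - intros [Ix HIs] [Jx HJs] z.
    split; intros Hz; [rewrite (HIs z Hz) | rewrite (HJs z Hz)]; auto.
  - intros (t & It & tB & xt & xmax) (t' & Jt' & t'B & xt' & xmax').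
    assert (Hgap : forall u u', ~ In u B -> ~ In u' B -> x < u ->
              (forall c, In c B -> c < u' -> c <= x) ->
              forall c, In c B -> u <= c <= u' -> False).
    { intros u u' uB u'B xu xmax_u' c Hc Hcu.
      destruct (Req_dec c u) as [->|]; [auto|].
      destruct (Req_dec c u') as [->|]; [auto|].
      pose proof (xmax_u' c Hc ltac:(lra)). lra. }
    destruct (Rle_dec t t').
    + apply (piece_ext_of_no_event_between I J t t'); auto.
      apply Hgap; auto.
    + intros z; symmetry; revert z.
      apply (piece_ext_of_no_event_between J I t' t); auto; [lra|].
      apply Hgap; auto.
Qed.

Lemma trajectoid_complexity_le :
  complexity_le tm tau X T (INR (2 * length B)).
Proof.
  intros L Hpieces Hdist. apply le_INR.
  replace (2 * length B)%nat with (length labels)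
    by (unfold labels; rewrite length_app, !length_map; lia).
  apply (labelling_length_le R_bool_dec
           (fun I p => piece tm tau X T I /\ piece_label B I p) (fun _ => False)).
  - intros I HI. destruct (piece_labelled I (Hpieces I HI)) as [p [Hp HlI]].
    exists p; auto.
  - intros i j Hi Hj Hij p [HpI HlI] [HpJ HlJ].
    destruct (Hdist i j Hi Hj Hij) as [z Hz].
    apply Hz, (piece_label_ext _ _ p); auto.
Qed.

End Pieces.

Theorem mainTheorem17 :
  exists C : R,
    forall (n tau : nat) (tm : nat -> R) (X : nat -> R -> R),
      (1 <= tau)%nat ->
      increasing_times tm tau ->
      piecewise_linear tm tau n X ->
      general_position tm tau n X ->
      forall T : R -> nat,
        central tm tau n X T ->
        complexity_le tm tau X T (C * INR tau * INR n ^ 2).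
Proof.
  exists 6. intros n tau tm X Htau Hinc Hpl Hgp T [Htr _].
  assert (Hn : (1 <= n)%nat).
  { enough (T (tm 0%nat) < n)%nat by lia. apply (proj1 Htr).
    split; [lra | apply (increasing_times_le tm tau Hinc); lia]. }
  destruct (crossing_times_bound tm tau n X Hinc Hpl Hgp) as [Bc [HBc HBcc]].
  set (B := map tm (seq 0 (S tau)) ++ Bc).
  assert (Hcomp : complexity_le tm tau X T (INR (2 * length B))).
  { apply (trajectoid_complexity_le tm tau n); auto.
    - intros p Hp. apply in_or_app; left. apply in_map, in_seq. lia.
    - intros i j t Hi Hj Hij Ht E. apply in_or_app; right.
      destruct (in_span_cell tm tau t Hinc Htau Ht) as [k [Hk Htk]].
      apply (HBcc k i j). repeat split; auto; lra. }
  intros L Hpieces Hdist. eapply Rle_trans; [apply Hcomp; auto|].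
  assert (Hlen : (2 * length B <= 6 * tau * (n * n))%nat).
  { unfold B. rewrite length_app, length_map, length_seq.
    assert (Hnn : (1 <= n * n)%nat) by nia.
    assert (tau * 1 <= tau * (n * n))%nat by (apply Nat.mul_le_mono_l; exact Hnn).
    rewrite <- Nat.mul_assoc. lia. }
  replace (6 * INR tau * INR n ^ 2) with (INR (6 * tau * (n * n)))
    by (rewrite !mult_INR; simpl; ring).
  apply le_INR, Hlen.
Qed.
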